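(* If $m$ is a universal probability, then the map $\Sigma^*\ni s\mapsto m(s)I$ ($I$ the $N\times N$ identity) is a universal semi-POVM.
   Context: $N$ is a fixed positive integer; $\Sigma^*$ is the set of finite binary strings. $\mathrm{Her}(N)$ is the set of $N\times N$ Hermitian matrices and $\mathrm{Her}_Q(N)$ those with entries in $\{a+ib:a,b\in\mathbb{Q}\}$; $A\leqslant B$ means $B-A$ is positive semi-definite. A lower-computable semi-measure is a function $r:\Sigma^*\to[0,\infty)$ with $\sum_s r(s)\le 1$ such that there is a total recursive $f:\mathbb{N}\times\Sigma^*\to\mathbb{Q}$ with $\lim_{n}f(n,s)=r(s)$ and $f(n,s)\le f(n+1,s)$ for all $n,s$. A universal probability is a lower-computable semi-measure $m$ such that for every lower-computable semi-measure $r$ there is $c>0$ with $c\,r(s)\le m(s)$ for all $s$. A semi-POVM on $\Sigma^*$ is a map $R:\Sigma^*\to\mathrm{Her}(N)$ with $0\leqslant R(s)$ for all $s$ and $\sum_s R(s)\leqslant I$. A lower-computable semi-POVM is a semi-POVM $R$ for which there is a total recursive $f:\mathbb{N}\times\Sigma^*\to\mathrm{Her}_Q(N)$ with $\lim_{n}f(n,s)=R(s)$ and $f(n,s)\leqslant R(s)$ for all $n,s$. A universal semi-POVM is a lower-computable semi-POVM $M$ such that for every lower-computable semi-POVM $R$ there is $c>0$ with $c\,R(s)\leqslant M(s)$ for all $s\in\Sigma^*$. *)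

From HB Require Import structures.
From mathcomp Require Import all_boot all_order all_algebra.
From mathcomp Require Import complex.
From mathcomp Require Import all_classical all_reals topology normedtype sequences.

Set Implicit Arguments.
Unset Strict Implicit.
Unset Printing Implicit Defensive.

Import Order.TTheory GRing.Theory Num.Theory.
Import numFieldNormedType.Exports.
Local Open Scope ring_scope.
Local Open Scope classical_set_scope.

(* Computability: mu-recursive functions on nat (Kleene), used through the   *)
(* standard effective encodings [pickle] of countable types (binary strings, *)
(* rationals, Gaussian-rational matrices) into nat.                          *)

Inductive mucode : Type :=
| MZero
| MSucc
| MProj of nat
| MComp of mucode & seq mucode
| MPrec of mucode & mucode
| MMin of mucode.

Inductive mueval : mucode -> seq nat -> nat -> Prop :=
| ev_zero xs : mueval MZero xs 0
| ev_succ x xs : mueval MSucc (x :: xs) x.+1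
| ev_proj i xs : mueval (MProj i) xs (nth 0 xs i)
| ev_comp f gs xs ys z :
    muevals gs xs ys -> mueval f ys z -> mueval (MComp f gs) xs z
| ev_prec0 g h xs y :
    mueval g xs y -> mueval (MPrec g h) (0 :: xs) y
| ev_precS g h n xs z y :
    mueval (MPrec g h) (n :: xs) z -> mueval h (n :: z :: xs) y ->
    mueval (MPrec g h) (n.+1 :: xs) y
| ev_min f xs n :
    mueval f (n :: xs) 0 ->
    (forall k, (k < n)%N -> exists v, mueval f (k :: xs) v.+1) ->
    mueval (MMin f) xs n
with muevals : seq mucode -> seq nat -> seq nat -> Prop :=
| evs_nil xs : muevals [::] xs [::]
| evs_cons g gs xs y ys :
    mueval g xs y -> muevals gs xs ys -> muevals (g :: gs) xs (y :: ys).

Definition total_recursive2 (A B C : countType) (f : A -> B -> C) : Prop :=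
  exists e : mucode, forall a b,
    mueval e [:: pickle a; pickle b] (pickle (f a b)).

Notation bstring := (seq bool).

Definition semi_measure (R : realType) (r : bstring -> R) : Prop :=
  (forall s, 0 <= r s) /\
  (forall F : seq bstring, uniq F -> \sum_(s <- F) r s <= 1).

Definition lower_computable_semi_measure (R : realType) (r : bstring -> R) :=
  semi_measure r /\
  exists f : nat -> bstring -> rat,
    [/\ total_recursive2 f,
        (forall s, (fun n => (ratr (f n s) : R)) @ \oo --> r s) &
        (forall n s, f n s <= f n.+1 s)].

Definition universal_probability (R : realType) (m : bstring -> R) :=
  lower_computable_semi_measure m /\
  forall r : bstring -> R, lower_computable_semi_measure r ->
    exists2 c : R, 0 < c & forall s, c * r s <= m s.

Local Open Scope complex_scope.

Definition adjmx (R : realType) m n (A : 'M[R[i]]_(m, n)) : 'M[R[i]]_(n, m) :=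
  (map_mx Num.conj A)^T.

Definition hermitian (R : realType) (N : nat) (A : 'M[R[i]]_N) : Prop :=
  adjmx A = A.

Definition psdmx (R : realType) (N : nat) (A : 'M[R[i]]_N) : Prop :=
  hermitian A /\ forall v : 'cV[R[i]]_N, 0 <= (adjmx v *m A *m v) 0 0.

Definition loewner (R : realType) (N : nat) (A B : 'M[R[i]]_N) : Prop :=
  psdmx (B - A).

Definition gauss_to (R : realType) (z : rat[i]) : R[i] :=
  (ratr (complex.Re z) : R) +i* (ratr (complex.Im z) : R).

Definition gmx_to (R : realType) (N : nat) (A : 'M[rat[i]]_N) : 'M[R[i]]_N :=
  map_mx (@gauss_to R) A.

Definition hermitian_Q (R : realType) (N : nat) (A : 'M[rat[i]]_N) : Prop :=
  hermitian (gmx_to R A).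

Definition cvgC (R : realType) (u : nat -> R[i]) (z : R[i]) : Prop :=
  (fun n => complex.Re (u n)) @ \oo --> complex.Re z /\ (fun n => complex.Im (u n)) @ \oo --> complex.Im z.

Definition cvgmx (R : realType) (N : nat) (M : nat -> 'M[R[i]]_N)
  (L : 'M[R[i]]_N) : Prop :=
  forall i j, cvgC (fun n => M n i j) (L i j).

Definition semi_POVM (R : realType) (N : nat) (P : bstring -> 'M[R[i]]_N) :=
  (forall s, psdmx (P s)) /\
  (forall F : seq bstring, uniq F -> loewner (\sum_(s <- F) P s) 1%:M).

Definition lower_computable_semi_POVM (R : realType) (N : nat)
  (P : bstring -> 'M[R[i]]_N) :=
  semi_POVM P /\
  exists f : nat -> bstring -> 'M[rat[i]]_N,
    [/\ total_recursive2 f,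
        (forall n s, hermitian_Q R (f n s)),
        (forall s, cvgmx (fun n => gmx_to R (f n s)) (P s)) &
        (forall n s, loewner (gmx_to R (f n s)) (P s))].

Definition universal_semi_POVM (R : realType) (N : nat)
  (M : bstring -> 'M[R[i]]_N) :=
  lower_computable_semi_POVM M /\
  forall P : bstring -> 'M[R[i]]_N, lower_computable_semi_POVM P ->
    exists2 c : R, 0 < c & forall s, loewner (c%:C *: P s) (M s).

(* Given a lower-computable semi-POVM P, every diagonal entry s |-> Re P(s)_ii is
   a lower-computable semi-measure: its rational approximants are the diagonal
   entries of those of P, made nondecreasing by taking running maxima (codes of
   rationals can be compared by a mu-recursive program).  Universality of m then
   gives c_i > 0 with c_i Re P(s)_ii <= m(s), so tr P(s) <= K m(s) for
   K = sum_i 1/c_i.  A positive semi-definite A satisfies A <= 2^N tr(A) I (the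
   parallelogram law applied along the standard basis), hence
   (2^N K)^-1 P(s) <= m(s) I.  That s |-> m(s) I is itself lower computable is
   routine: its approximants are scalar matrices, whose codes are computable from
   the codes of their rational diagonal entry. *)

From HB Require Import structures.
From mathcomp Require Import all_boot all_order all_algebra.
From mathcomp Require Import complex.
From mathcomp Require Import all_classical all_reals topology normedtype sequences.
From mathcomp Require Import ring zify.

Set Implicit Arguments.
Unset Strict Implicit.
Unset Printing Implicit Defensive.

Import Order.TTheory GRing.Theory Num.Theory.
Import numFieldNormedType.Exports.

(** * Mu-recursive arithmetic *)

Definition computes (e : mucode) (G : seq nat -> nat) :=
  forall xs, mueval e xs (G xs).
Definition computes1 (e : mucode) (F : nat -> nat) :=
  forall a, mueval e [:: a] (F a).
Definition computes2 (e : mucode) (F : nat -> nat -> nat) :=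
  forall a b, mueval e [:: a; b] (F a b).

Lemma computes_zero : computes MZero (fun=> 0).
Proof. by move=> xs; constructor. Qed.

Lemma computes_proj i : computes (MProj i) (fun xs => nth 0 xs i).
Proof. by move=> xs; constructor. Qed.

Lemma computes1_of e G : computes e G -> computes1 e (fun a => G [:: a]).
Proof. by move=> eG a; apply: eG. Qed.

Lemma computes2_of e G : computes e G -> computes2 e (fun a b => G [:: a; b]).
Proof. by move=> eG a b; apply: eG. Qed.

Lemma mueval_comp1 c F g xs v :
  computes1 c F -> mueval g xs v -> mueval (MComp c [:: g]) xs (F v).
Proof. by move=> cF gv; apply: ev_comp (cF v); do! constructor. Qed.

Lemma mueval_comp2 c F g1 g2 xs v1 v2 : computes2 c F ->
  mueval g1 xs v1 -> mueval g2 xs v2 -> mueval (MComp c [:: g1; g2]) xs (F v1 v2).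
Proof. by move=> cF gv1 gv2; apply: ev_comp (cF v1 v2); do! constructor. Qed.

Lemma computes_comp1 c F g G :
  computes1 c F -> computes g G -> computes (MComp c [:: g]) (fun xs => F (G xs)).
Proof. by move=> cF gG xs; apply: mueval_comp1. Qed.

Lemma computes_comp2 c F g1 G1 g2 G2 :
  computes2 c F -> computes g1 G1 -> computes g2 G2 ->
  computes (MComp c [:: g1; g2]) (fun xs => F (G1 xs) (G2 xs)).
Proof. by move=> cF gG1 gG2 xs; apply: mueval_comp2. Qed.

Definition csucc := MComp MSucc [:: MProj 0].

Lemma computes_succ : computes csucc (fun xs => (nth 0 xs 0).+1).
Proof. by move=> xs; apply: ev_comp (ev_succ _ _); do! constructor. Qed.

Lemma computes1_succ : computes1 csucc succn.
Proof. exact: computes1_of computes_succ. Qed.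

Fixpoint prim_rec (G H : seq nat -> nat) n ys :=
  if n is n'.+1 then H (n' :: prim_rec G H n' ys :: ys) else G ys.

Lemma mueval_prec g G h H : computes g G -> computes h H ->
  forall n ys, mueval (MPrec g h) (n :: ys) (prim_rec G H n ys).
Proof.
move=> gG hH; elim=> [|n IHn] ys /=; first by constructor.
exact: ev_precS (IHn ys) _.
Qed.

Lemma computes_prec g G h H : computes g G -> computes h H ->
  computes (MComp (MPrec g h) [:: MProj 0; MProj 1])
           (fun xs => prim_rec G H (nth 0 xs 0) [:: nth 0 xs 1]).
Proof. by move=> gG hH xs; apply: ev_comp (mueval_prec gG hH _ _); do! constructor. Qed.

Lemma mueval_min f F xs n : computes f F -> F (n :: xs) = 0 ->
  (forall k, k < n -> F (k :: xs) <> 0) -> mueval (MMin f) xs n.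
Proof.
move=> fF Fn0 Fk_neq0; constructor; first by rewrite -Fn0.
move=> k /Fk_neq0; case Fk: (F (k :: xs)) => [//|v] _.
by exists v; rewrite -Fk.
Qed.

Definition cadd :=
  MComp (MPrec (MProj 0) (MComp MSucc [:: MProj 1])) [:: MProj 0; MProj 1].

Lemma computes2_add : computes2 cadd addn.
Proof.
have succ1 : computes (MComp MSucc [:: MProj 1]) (fun xs => (nth 0 xs 1).+1).
  by move=> xs; apply: ev_comp (ev_succ _ _); do! constructor.
move=> a b; have := computes_prec (computes_proj 0) succ1 [:: a; b] => /=.
by congr mueval; elim: a => //= a ->.
Qed.

Definition cmul :=
  MComp (MPrec MZero (MComp cadd [:: MProj 1; MProj 2])) [:: MProj 0; MProj 1].

Lemma computes2_mul : computes2 cmul muln.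
Proof.
have add12 := computes_comp2 computes2_add (computes_proj 1) (computes_proj 2).
move=> a b; have := computes_prec computes_zero add12 [:: a; b] => /=.
by congr mueval; elim: a => //= a ->; rewrite mulSn addnC.
Qed.

Definition cpred := MComp (MPrec MZero (MProj 0)) [:: MProj 0; MProj 1].

Lemma computes1_pred : computes1 cpred predn.
Proof.
move=> a; have := computes_prec computes_zero (computes_proj 0) [:: a] => /=.
by case: a.
Qed.

Definition csubr :=
  MComp (MPrec (MProj 0) (MComp cpred [:: MProj 1])) [:: MProj 0; MProj 1].
Definition csub := MComp csubr [:: MProj 1; MProj 0].

Lemma computes2_sub : computes2 csub subn.
Proof.
have pred1 := computes_comp1 computes1_pred (computes_proj 1).
have subr : computes2 csubr (fun a b => b - a).
  move=> a b; have := computes_prec (computes_proj 0) pred1 [:: a; b] => /=.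
  by congr mueval; elim: a => [|a /= ->]; rewrite ?subn0 ?subnS.
by move=> a b; apply: ev_comp (subr b a); do! constructor.
Qed.

Fixpoint cconst n := if n is n'.+1 then MComp csucc [:: cconst n'] else MZero.

Lemma computes_const n : computes (cconst n) (fun=> n).
Proof.
elim: n => [|n IHn] xs /=; first by constructor.
exact: mueval_comp1 computes1_succ (IHn xs).
Qed.

Definition cexp2 :=
  MComp (MPrec (cconst 1) (MComp cadd [:: MProj 1; MProj 1])) [:: MProj 0; MProj 1].

Lemma computes1_exp2 : computes1 cexp2 (expn 2).
Proof.
have double1 := computes_comp2 computes2_add (computes_proj 1) (computes_proj 1).
move=> a; have := computes_prec (computes_const 1) double1 [:: a] => /=.
by congr mueval; elim: a => //= a ->; rewrite expnS mul2n addnn.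
Qed.

(* [x %/ 2 ^ k] is the least [q] with [x < (q + 1) 2 ^ k]. *)
Definition cdiv_exp2 := MMin (MComp csub [:: MComp csucc [:: MProj 1];
   MComp cmul [:: MComp csucc [:: MProj 0]; MComp cexp2 [:: MProj 2]]]).

Lemma computes2_div_exp2 : computes2 cdiv_exp2 (fun x k => x %/ 2 ^ k).
Proof.
have test : computes (MComp csub [:: MComp csucc [:: MProj 1];
    MComp cmul [:: MComp csucc [:: MProj 0]; MComp cexp2 [:: MProj 2]]])
  (fun xs => (nth 0 xs 1).+1 - (nth 0 xs 0).+1 * 2 ^ nth 0 xs 2).
  apply: computes_comp2 computes2_sub _ _.
    exact: computes_comp1 computes1_succ (computes_proj 1).
  apply: computes_comp2 computes2_mul _ _.
    exact: computes_comp1 computes1_succ (computes_proj 0).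
  exact: computes_comp1 computes1_exp2 (computes_proj 2).
move=> x k; apply: (mueval_min test) => /=.
  by apply/eqP; rewrite subn_eq0; apply: ltn_ceil; rewrite expn_gt0.
move=> q lt_q; apply/eqP; rewrite subn_eq0 -ltnNge ltnS.
by rewrite -leq_divRL ?expn_gt0.
Qed.

Definition cmod_exp2 := MComp csub [:: MProj 0;
  MComp cmul [:: MComp cdiv_exp2 [:: MProj 0; MProj 1]; MComp cexp2 [:: MProj 1]]].

Lemma computes2_mod_exp2 : computes2 cmod_exp2 (fun x k => x %% 2 ^ k).
Proof.
have h : computes cmod_exp2
    (fun xs => nth 0 xs 0 - nth 0 xs 0 %/ 2 ^ nth 0 xs 1 * 2 ^ nth 0 xs 1).
  apply: computes_comp2 computes2_sub (computes_proj 0) _.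
  apply: computes_comp2 computes2_mul _ _.
    exact: computes_comp2 computes2_div_exp2 (computes_proj 0) (computes_proj 1).
  exact: computes_comp1 computes1_exp2 (computes_proj 1).
move=> x k; rewrite -(_ : x - x %/ 2 ^ k * 2 ^ k = x %% 2 ^ k); first exact: h.
by rewrite {1}(divn_eq x (2 ^ k)) addKn.
Qed.

(* [logn 2 x] is the least [k] such that [x = 0] or [2 ^ k.+1] does not divide [x]. *)
Definition clog2 := MMin (MComp cmul [:: MProj 1;
  MComp csub [:: cconst 1; MComp cmod_exp2 [:: MProj 1; MComp csucc [:: MProj 0]]]]).

Lemma computes1_log2 : computes1 clog2 (logn 2).
Proof.
have test : computes (MComp cmul [:: MProj 1;
    MComp csub [:: cconst 1; MComp cmod_exp2 [:: MProj 1; MComp csucc [:: MProj 0]]]])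
  (fun xs => nth 0 xs 1 * (1 - nth 0 xs 1 %% 2 ^ (nth 0 xs 0).+1)).
  apply: computes_comp2 computes2_mul (computes_proj 1) _.
  apply: computes_comp2 computes2_sub (computes_const 1) _.
  apply: computes_comp2 computes2_mod_exp2 (computes_proj 1) _.
  exact: computes_comp1 computes1_succ (computes_proj 0).
move=> x; apply: (mueval_min test) => /=.
  have [->|x_gt0] := posnP x; first by rewrite logn0.
  apply/eqP; rewrite muln_eq0 subn_eq0 lt0n; apply/orP; right; apply/negP.
  by rewrite -/(dvdn _ x) pfactor_dvdn // ltnn.
move=> k; have [->|x_gt0 lt_k] := posnP x; first by rewrite logn0.
have : 2 ^ k.+1 %| x by rewrite pfactor_dvdn.
by rewrite /dvdn => /eqP ->; rewrite subn0 muln1; apply/eqP; rewrite -lt0n.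
Qed.

(** * Codes of sequences, integers, rationals and matrices *)

Lemma logn2_odd c : logn 2 c.*2.+1 = 0.
Proof.
apply/eqP; rewrite -leqn0 leqNgt logn_gt0 mem_primes /=.
by rewrite dvdn2 /= odd_double.
Qed.

Lemma code_cons a s : CodeSeq.code (a :: s) = 2 ^ a * (CodeSeq.code s).*2.+1.
Proof. by []. Qed.

Lemma logn2_code_cons a s : logn 2 (CodeSeq.code (a :: s)) = a.
Proof. by rewrite code_cons lognM ?expn_gt0 // pfactorK // logn2_odd addn0. Qed.

Definition code_tail x := x %/ 2 ^ (logn 2 x).+1.

Lemma code_tail_cons a s : code_tail (CodeSeq.code (a :: s)) = CodeSeq.code s.
Proof.
rewrite /code_tail logn2_code_cons code_cons expnSr divnMl ?expn_gt0 //.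
by rewrite -[_.*2.+1]addn1 -muln2 divnMDl // divn_small // addn0.
Qed.

Definition code_nth j x := logn 2 (iter j code_tail x).

Lemma code_nthE j s : code_nth j (CodeSeq.code s) = nth 0 s j.
Proof.
have tail0 k : iter k code_tail 0 = 0.
  by elim: k => //= k ->; rewrite /code_tail div0n.
rewrite /code_nth; elim: j s => [|j IHj] [|a s] //=.
- by rewrite logn2_code_cons.
- by rewrite tail0.
- by rewrite -iterS iterSr code_tail_cons IHj.
Qed.

Definition ctail := MComp cdiv_exp2 [:: MProj 0; MComp csucc [:: MComp clog2 [:: MProj 0]]].

Lemma computes1_code_tail : computes1 ctail code_tail.
Proof.
apply: (@computes1_of _ (fun xs => code_tail (nth 0 xs 0))).
apply: computes_comp2 computes2_div_exp2 (computes_proj 0) _.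
exact: computes_comp1 computes1_succ (computes_comp1 computes1_log2 (computes_proj 0)).
Qed.

Fixpoint citer_tail j g := if j is j'.+1 then MComp ctail [:: citer_tail j' g] else g.

Lemma computes_iter_tail j g G :
  computes g G -> computes (citer_tail j g) (fun xs => iter j code_tail (G xs)).
Proof. by move=> gG; elim: j => //= j IHj; apply: computes_comp1 computes1_code_tail IHj. Qed.

(* Codes of integers: [pickle (Posz n) = code [:: code [:: n]; 0]] and
   [pickle (Negz n) = code [:: 0; code [:: n]]]. *)
Definition posz_part (z : int) := if z is Posz n then n else 0.
Definition negz_part (z : int) := if z is Negz n then n.+1 else 0.

Lemma posz_negz_part (z : int) : z = ((posz_part z)%:Z - (negz_part z)%:Z)%R.
Proof. by case: z => n; rewrite /= ?subr0 ?sub0r. Qed.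

Definition int_pos_code x := logn 2 (logn 2 x).
Definition int_neg_code x := (1 - logn 2 x) * (logn 2 (logn 2 (code_tail x))).+1.

Lemma int_pos_codeE (z : int) : int_pos_code (pickle z) = posz_part z.
Proof.
case: z => n.
  have -> : pickle (Posz n) = CodeSeq.code [:: CodeSeq.code [:: n]; 0] by [].
  by rewrite /int_pos_code !logn2_code_cons.
have -> : pickle (Negz n) = CodeSeq.code [:: 0; CodeSeq.code [:: n]] by [].
by rewrite /int_pos_code logn2_code_cons.
Qed.

Lemma int_neg_codeE (z : int) : int_neg_code (pickle z) = negz_part z.
Proof.
case: z => n.
  have -> : pickle (Posz n) = CodeSeq.code [:: CodeSeq.code [:: n]; 0] by [].
  rewrite /int_neg_code logn2_code_cons [CodeSeq.code [:: n]]code_cons.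
  by rewrite (_ : 1 - _ = 0) //; apply/eqP; rewrite subn_eq0 muln_gt0 expn_gt0.
have -> : pickle (Negz n) = CodeSeq.code [:: 0; CodeSeq.code [:: n]] by [].
by rewrite /int_neg_code logn2_code_cons code_tail_cons !logn2_code_cons mul1n.
Qed.

Definition cint_pos g := MComp clog2 [:: MComp clog2 [:: g]].
Definition cint_neg g := MComp cmul [:: MComp csub [:: cconst 1; MComp clog2 [:: g]];
   MComp csucc [:: cint_pos (MComp ctail [:: g])]].

Lemma computes_int_pos g G :
  computes g G -> computes (cint_pos g) (fun xs => int_pos_code (G xs)).
Proof. by move=> gG; do 2 apply: computes_comp1 computes1_log2 _. Qed.

Lemma computes_int_neg g G :
  computes g G -> computes (cint_neg g) (fun xs => int_neg_code (G xs)).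
Proof.
move=> gG; apply: computes_comp2 computes2_mul _ _.
  exact: computes_comp2 computes2_sub (computes_const 1) (computes_comp1 computes1_log2 gG).
apply: computes_comp1 computes1_succ _.
exact: computes_int_pos (computes_comp1 computes1_code_tail gG).
Qed.

(* [pickle r = code [:: pickle (numq r); pickle (denq r)]]; the test vanishes
   iff [numq r1 * denq r2 <= numq r2 * denq r1]. *)
Definition rat_le_code x1 x2 :=
  let p1 := int_pos_code (logn 2 x1) in let n1 := int_neg_code (logn 2 x1) in
  let d1 := int_pos_code (logn 2 (code_tail x1)) in
  let p2 := int_pos_code (logn 2 x2) in let n2 := int_neg_code (logn 2 x2) in
  let d2 := int_pos_code (logn 2 (code_tail x2)) in
  (p1 * d2 + n2 * d1) - (p2 * d1 + n1 * d2).

Lemma rat_le_codeP (r1 r2 : rat) :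
  (rat_le_code (pickle r1) (pickle r2) == 0) = (r1 <= r2)%R.
Proof.
have pickle_rat (r : rat) :
  pickle r = CodeSeq.code [:: pickle (numq r); pickle (denq r)] by [].
rewrite /rat_le_code !pickle_rat !logn2_code_cons !code_tail_cons !logn2_code_cons.
rewrite !int_pos_codeE !int_neg_codeE -[(r1 <= r2)%R]/(le_rat r1 r2) le_ratE.
rewrite [in RHS](posz_negz_part (numq r1)) [in RHS](posz_negz_part (numq r2)).
have := denq_gt0 r1; have := denq_gt0 r2; rewrite subn_eq0.
case: (denq r1) => // e1; case: (denq r2) => // e2 _ _.
by case: (numq r1) => a; case: (numq r2) => b /=; lia.
Qed.

Definition crat_le :=
  let num i := MComp clog2 [:: MProj i] in
  let den i := cint_pos (MComp clog2 [:: MComp ctail [:: MProj i]]) in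
  MComp csub [::
    MComp cadd [:: MComp cmul [:: cint_pos (num 0); den 1];
                   MComp cmul [:: cint_neg (num 1); den 0]];
    MComp cadd [:: MComp cmul [:: cint_pos (num 1); den 0];
                   MComp cmul [:: cint_neg (num 0); den 1]]].

Lemma computes2_rat_le_code : computes2 crat_le rat_le_code.
Proof.
apply: (@computes2_of _ (fun xs => rat_le_code (nth 0 xs 0) (nth 0 xs 1))).
have num i : computes (MComp clog2 [:: MProj i]) (fun xs => logn 2 (nth 0 xs i)).
  exact: computes_comp1 computes1_log2 (computes_proj i).
have den i : computes (cint_pos (MComp clog2 [:: MComp ctail [:: MProj i]]))
    (fun xs => int_pos_code (logn 2 (code_tail (nth 0 xs i)))).
  apply/computes_int_pos/(computes_comp1 computes1_log2).
  exact: computes_comp1 computes1_code_tail (computes_proj i).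
by apply: computes_comp2 computes2_sub _ _; apply: computes_comp2 computes2_add _ _;
  apply: computes_comp2 computes2_mul _ _;
  do ?[exact: den | exact: computes_int_pos | exact: computes_int_neg].
Qed.

Definition ifz t a b := (1 - t) * a + (1 - (1 - t)) * b.

Lemma ifzE t a b : ifz t a b = if t == 0 then a else b.
Proof. by case: t => [|t]; rewrite /ifz ?subn0 ?sub0n ?subn0 /= ?mul1n ?mul0n ?addn0. Qed.

Definition cifz t a b := MComp cadd [::
  MComp cmul [:: MComp csub [:: cconst 1; t]; a];
  MComp cmul [:: MComp csub [:: cconst 1; MComp csub [:: cconst 1; t]]; b]].

Lemma computes_ifz t T a A b B : computes t T -> computes a A -> computes b B ->
  computes (cifz t a b) (fun xs => ifz (T xs) (A xs) (B xs)).
Proof.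
move=> tT aA bB; have one := computes_const 1.
have notT := computes_comp2 computes2_sub one tT.
apply: computes_comp2 computes2_add _ _; apply: computes_comp2 computes2_mul _ _ => //.
exact: computes_comp2 computes2_sub one notT.
Qed.

Definition rat_max_code x1 x2 := ifz (rat_le_code x1 x2) x2 x1.

Lemma rat_max_codeE (r1 r2 : rat) :
  rat_max_code (pickle r1) (pickle r2) = pickle (Num.max r1 r2).
Proof. by rewrite /rat_max_code ifzE rat_le_codeP /Num.max; case: ltgtP => // ->. Qed.

Definition crat_max := cifz (MComp crat_le [:: MProj 0; MProj 1]) (MProj 1) (MProj 0).

Lemma computes2_rat_max_code : computes2 crat_max rat_max_code.
Proof.
apply: (@computes2_of _ (fun xs => rat_max_code (nth 0 xs 0) (nth 0 xs 1))).
apply: computes_ifz (computes_proj 1) (computes_proj 0).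
exact: computes_comp2 computes2_rat_le_code (computes_proj 0) (computes_proj 1).
Qed.

Definition ccons := MComp cmul [:: MComp cexp2 [:: MProj 0];
  MComp csucc [:: MComp cadd [:: MProj 1; MProj 1]]].

Lemma computes2_code_cons : computes2 ccons (fun a c => 2 ^ a * c.*2.+1).
Proof.
apply: (@computes2_of _ (fun xs => 2 ^ nth 0 xs 0 * (nth 0 xs 1).*2.+1)).
apply: computes_comp2 computes2_mul _ _.
  exact: computes_comp1 computes1_exp2 (computes_proj 0).
apply: computes_comp1 computes1_succ _; rewrite -(funext (fun xs => addnn _)).
exact: computes_comp2 computes2_add (computes_proj 1) (computes_proj 1).
Qed.

Definition clist (T : Type) (cf : T -> mucode) (keys : seq T) :=
  foldr (fun x c => MComp ccons [:: cf x; c]) MZero keys.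

Lemma computes_clist (T : Type) (cf : T -> mucode) (F : T -> seq nat -> nat) keys :
  (forall x, computes (cf x) (F x)) ->
  computes (clist cf keys) (fun xs => CodeSeq.code [seq F x xs | x <- keys]).
Proof.
move=> cfF; elim: keys => [|x keys IHkeys] /=; first exact: computes_zero.
exact: computes_comp2 computes2_code_cons (cfF x) IHkeys.
Qed.

Lemma pickle_complex (z : rat[i]) :
  pickle z = CodeSeq.code [:: pickle (complex.Re z); pickle (complex.Im z)].
Proof. by case: z. Qed.

Lemma pickle_matrix n (A : 'M[rat[i]]_n) : pickle A =
  CodeSeq.code [seq CodeSeq.code [:: pickle x; pickle (A x.1 x.2)]
               | x <- enum {: 'I_n * 'I_n}].
Proof.
case: A => f; rewrite -[pickle (Matrix f)]/(pickle (tval (tfgraph f))).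
rewrite /tfgraph /= /codom /image_mem -map_comp.
by congr (CodeSeq.code _); rewrite -map_comp enumT; apply: eq_map => -[i j].
Qed.

Definition diag_code n (i : 'I_n) x :=
  logn 2 (logn 2 (code_tail (code_nth (index (i, i) (enum {: 'I_n * 'I_n})) x))).

Lemma diag_codeE n (i : 'I_n) (A : 'M[rat[i]]_n) :
  diag_code i (pickle A) = pickle (complex.Re (A i i)).
Proof.
rewrite /diag_code pickle_matrix code_nthE.
have ii_enum : (i, i) \in enum {: 'I_n * 'I_n} by rewrite mem_enum.
rewrite (nth_map (i, i)) ?index_mem // nth_index //.
by rewrite code_tail_cons logn2_code_cons pickle_complex logn2_code_cons.
Qed.

Definition cdiag n (i : 'I_n) := MComp clog2 [:: MComp clog2 [:: MComp ctail
  [:: MComp clog2 [:: citer_tail (index (i, i) (enum {: 'I_n * 'I_n})) (MProj 0)]]]].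

Lemma computes1_diag_code n (i : 'I_n) : computes1 (cdiag i) (diag_code i).
Proof.
apply: (@computes1_of _ (fun xs => diag_code i (nth 0 xs 0))).
do 2 apply: computes_comp1 computes1_log2 _; apply: computes_comp1 computes1_code_tail _.
exact/(computes_comp1 computes1_log2)/computes_iter_tail/computes_proj.
Qed.

Fixpoint running_max (v : nat -> rat) n :=
  if n is n'.+1 then Num.max (running_max v n') (v n) else v 0.

Lemma total_recursive2_running_max_diag n (i : 'I_n)
    (f : nat -> bstring -> 'M[rat[i]]_n) : total_recursive2 f ->
  total_recursive2 (fun k s => running_max (fun l => complex.Re (f l s i i)) k).
Proof.
case=> e fe.
pose g := MComp (cdiag i) [:: MComp e [:: MZero; MProj 0]].
pose h := MComp crat_max [:: MProj 1; MComp (cdiag i) [:: MComp e [:: csucc; MProj 2]]].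
exists (MPrec g h) => k s; rewrite [pickle k]/=.
elim: k => [|k IHk] /=.
  apply: ev_prec0; rewrite -diag_codeE; apply: mueval_comp1 (computes1_diag_code i) _.
  by apply: ev_comp (fe 0 s); do! constructor.
apply: ev_precS IHk _.
rewrite -rat_max_codeE; apply: mueval_comp2 computes2_rat_max_code _ _; first by constructor.
rewrite -diag_codeE; apply: mueval_comp1 (computes1_diag_code i) _.
apply: ev_comp (fe k.+1 s); constructor; first exact: computes_succ.
by do! constructor.
Qed.

Local Open Scope classical_set_scope.
Local Open Scope ring_scope.
Local Open Scope complex_scope.

Definition cscalar_entry n (x : 'I_n * 'I_n) := MComp ccons [:: cconst (pickle x);
  MComp ccons [:: (if x.1 == x.2 then
                     MComp ccons [:: MProj 0; MComp ccons [:: cconst (pickle (0 : rat)); MZero]]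
                   else cconst (pickle (0 : rat[i]))); MZero]].

Definition cscalar n := clist (@cscalar_entry n) (enum {: 'I_n * 'I_n}).

Lemma mueval_scalar n (q : rat) :
  mueval (cscalar n) [:: pickle q] (pickle ((q%:C)%:M : 'M[rat[i]]_n)).
Proof.
pose F (x : 'I_n * 'I_n) (xs : seq nat) := CodeSeq.code [:: pickle x;
  if x.1 == x.2 then CodeSeq.code [:: nth 0%N xs 0%N; pickle (0 : rat)]
  else pickle (0 : rat[i])].
rewrite pickle_matrix (@eq_map _ _ _ (fun x => F x [:: pickle q])); last first.
  by move=> [a b]; rewrite /F mxE; case: (a == b); rewrite //= pickle_complex.
apply: (@computes_clist _ (@cscalar_entry n) F) => x xs; rewrite /F /cscalar_entry.
apply: mueval_comp2 computes2_code_cons (computes_const _ _) _.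
apply: mueval_comp2 computes2_code_cons _ (computes_zero _).
case: (x.1 == x.2); last exact: computes_const.
apply: mueval_comp2 computes2_code_cons (computes_proj _ _) _.
exact: mueval_comp2 computes2_code_cons (computes_const _ _) (computes_zero _).
Qed.

Lemma total_recursive2_scalar n (f : nat -> bstring -> rat) : total_recursive2 f ->
  total_recursive2 (fun k s => ((f k s)%:C)%:M : 'M[rat[i]]_n).
Proof.
case=> e fe; exists (MComp (cscalar n) [:: e]) => k s.
by apply: ev_comp (mueval_scalar n (f k s)); do! constructor.
Qed.

(** * Hermitian forms and the Loewner order *)

Lemma adjmxD (R : realType) m n (A B : 'M[R[i]]_(m, n)) :
  adjmx (A + B) = adjmx A + adjmx B.
Proof. by apply/matrixP => i j; rewrite !mxE /= rmorphD. Qed.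

Lemma adjmxN (R : realType) m n (A : 'M[R[i]]_(m, n)) : adjmx (- A) = - adjmx A.
Proof. by apply/matrixP => i j; rewrite !mxE /= rmorphN. Qed.

Lemma adjmxB (R : realType) m n (A B : 'M[R[i]]_(m, n)) :
  adjmx (A - B) = adjmx A - adjmx B.
Proof. by rewrite adjmxD adjmxN. Qed.

Lemma adjmxZ (R : realType) m n (a : R[i]) (A : 'M[R[i]]_(m, n)) :
  adjmx (a *: A) = Num.conj a *: adjmx A.
Proof. by apply/matrixP => i j; rewrite !mxE /= rmorphM. Qed.

Lemma adjmx_scalar (R : realType) n (a : R[i]) : adjmx (a%:M : 'M_n) = (Num.conj a)%:M.
Proof. by apply/matrixP => i j; rewrite !mxE /= rmorphMn eq_sym. Qed.

Lemma adjmx_delta (R : realType) n (i : 'I_n) :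
  adjmx (delta_mx i 0 : 'cV[R[i]]_n) = delta_mx 0 i.
Proof.
apply/matrixP => a b; rewrite !mxE /= andbC.
by case: (_ && _); rewrite ?rmorph1 ?rmorph0.
Qed.

Section HermitianForm.

Variables (R : realType) (n : nat).
Implicit Types (a : R[i]) (A B : 'M[R[i]]_n) (u v w : 'cV[R[i]]_n).

Definition hform A u v := (adjmx u *m A *m v) 0 0.

Lemma hformDl A u v w : hform A (u + v) w = hform A u w + hform A v w.
Proof. by rewrite /hform adjmxD !mulmxDl mxE. Qed.

Lemma hformDr A u v w : hform A w (u + v) = hform A w u + hform A w v.
Proof. by rewrite /hform !mulmxDr mxE. Qed.

Lemma hformNl A u w : hform A (- u) w = - hform A u w.
Proof. by rewrite /hform adjmxN !mulNmx mxE. Qed.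

Lemma hformNr A u w : hform A w (- u) = - hform A w u.
Proof. by rewrite /hform !mulmxN mxE. Qed.

Lemma hformZl A a u w : hform A (a *: u) w = Num.conj a * hform A u w.
Proof. by rewrite /hform adjmxZ -!scalemxAl mxE. Qed.

Lemma hformZr A a u w : hform A w (a *: u) = a * hform A w u.
Proof. by rewrite /hform -!scalemxAr mxE. Qed.

Lemma hformBm A B v : hform (A - B) v v = hform A v v - hform B v v.
Proof. by rewrite /hform mulmxBr mulmxBl !mxE. Qed.

Lemma hformZm A a v : hform (a *: A) v v = a * hform A v v.
Proof. by rewrite /hform -scalemxAr -scalemxAl mxE. Qed.

Lemma hform_delta A i j : hform A (delta_mx i 0) (delta_mx j 0) = A i j.
Proof. by rewrite /hform adjmx_delta -rowE -colE !mxE. Qed.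

Lemma hform_parallelogram A u w :
  hform A (u + w) (u + w) + hform A (u - w) (u - w) =
  2 * hform A u u + 2 * hform A w w.
Proof. by rewrite !hformDl !hformDr !hformNl !hformNr; ring. Qed.

Definition sqnorm v := hform 1%:M v v.

Lemma sqnormE v : sqnorm v = \sum_j Num.conj (v j 0) * v j 0.
Proof. by rewrite /sqnorm /hform mulmx1 !mxE; apply: eq_bigr => j _; rewrite !mxE. Qed.

Lemma sqnorm_ge0 v : 0 <= sqnorm v.
Proof. by rewrite sqnormE; apply: sumr_ge0 => j _; rewrite mulrC mul_conjC_ge0. Qed.

Lemma hform_scalar a v : hform a%:M v v = a * sqnorm v.
Proof. by rewrite /sqnorm /hform mul_mx_scalar -scalemxAl mulmx1 mxE. Qed.

Lemma psdmx_scalar a : 0 <= a -> psdmx (a%:M : 'M[R[i]]_n).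
Proof.
move=> a_ge0; split; first by red; rewrite adjmx_scalar geC0_conj.
by move=> v; rewrite -/(hform _ v v) hform_scalar mulr_ge0 ?sqnorm_ge0.
Qed.

Lemma psdmx_diag_ge0 A : psdmx A -> forall i, 0 <= A i i.
Proof. by move=> [_ A_psd] i; rewrite -hform_delta; apply: A_psd. Qed.

Lemma psdmx_trace_ge0 A : psdmx A -> 0 <= \tr A.
Proof. by move=> A_psd; apply: sumr_ge0 => i _; apply: psdmx_diag_ge0. Qed.

(* By the parallelogram law, [q (x + y) <= 2 q x + 2 q y] for a nonnegative form [q]. *)
Lemma hform_sum_le A (I : Type) (F : I -> 'cV[R[i]]_n) (l : seq I) : psdmx A ->
  hform A (\sum_(j <- l) F j) (\sum_(j <- l) F j) <=
  2 ^+ size l * \sum_(j <- l) hform A (F j) (F j).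
Proof.
move=> [_ A_psd]; have q_ge0 x : 0 <= hform A x x by exact: A_psd.
elim: l => [|x l IHl]; first by rewrite !big_nil /hform mulmx0 mxE mulr0.
rewrite !big_cons /=; set S := \sum_(j <- l) F j.
have par : hform A (F x + S) (F x + S) <= 2 * hform A (F x) (F x) + 2 * hform A S S.
  by rewrite -hform_parallelogram lerDl q_ge0.
apply: le_trans par _; rewrite exprS -mulrA mulrDr mulrDr lerD // ?ler_pM2l ?ltr0n //.
by rewrite -[leLHS]mul1r ler_wpM2r ?q_ge0 // exprn_ege1 // ler1n.
Qed.

Lemma psdmx_hform_le A v : psdmx A -> hform A v v <= 2 ^+ n * (sqnorm v * \tr A).
Proof.
move=> A_psd; have v_delta : v = \sum_j v j 0 *: delta_mx j 0.
  by rewrite {1}(matrix_sum_delta v); apply: eq_bigr => j _; rewrite big_ord1.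
rewrite {1 2}v_delta; apply: le_trans (hform_sum_le _ _ A_psd) _.
have -> : size (index_enum 'I_n) = n by rewrite /index_enum unlock -enumT size_enum_ord.
rewrite ler_pM2l ?exprn_gt0 ?ltr0n // sqnormE mulr_suml.
apply: ler_sum => j _; rewrite hformZl hformZr hform_delta mulrA.
rewrite ler_wpM2l ?(mulrC _ (v j 0)) ?mul_conjC_ge0 // /mxtrace (bigD1 j) //= lerDl.
by apply: sumr_ge0 => k _; apply: psdmx_diag_ge0.
Qed.

Lemma loewner_psdmx_scalar A (K a : R) : psdmx A -> 0 < K ->
  complex.Re (\tr A) <= K * a -> loewner (((2 ^+ n * K)^-1)%:C *: A) a%:C%:M.
Proof.
move=> A_psd K_gt0 le_trA; have [A_herm _] := A_psd.
set c := (2 ^+ n * K)^-1; have c_ge0 : 0 <= c by rewrite invr_ge0 ltW ?mulr_gt0 ?exprn_gt0.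
have le_a : c * 2 ^+ n * complex.Re (\tr A) <= a.
  by rewrite -mulrA ler_pdivrMl ?mulr_gt0 ?exprn_gt0 // -mulrA ler_pM2l ?exprn_gt0.
have conjR (x : R) : Num.conj x%:C = x%:C by exact: conjc_real.
split; first by red; rewrite adjmxB adjmx_scalar adjmxZ !conjR A_herm.
move=> v; rewrite -/(hform _ v v) hformBm hform_scalar hformZm subr_ge0.
have trA : \tr A = (complex.Re (\tr A))%:C.
  by rewrite RRe_real // ger0_real // psdmx_trace_ge0.
apply: le_trans (ler_wpM2l _ (psdmx_hform_le v A_psd)) _; first by rewrite ler0c.
have -> : c%:C * (2 ^+ n * (sqnorm v * \tr A)) =
          sqnorm v * (c * 2 ^+ n * complex.Re (\tr A))%:C.
  by rewrite trA !rmorphM rmorphXn rmorph_nat; ring.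
by rewrite [_ * sqnorm v]mulrC ler_wpM2l ?sqnorm_ge0 ?lecR.
Qed.

End HermitianForm.

(** * Lower computability *)

Lemma Re_le (R : realType) (x y : R[i]) : x <= y -> complex.Re x <= complex.Re y.
Proof. by rewrite lecE => /andP[]. Qed.

Lemma loewner_diag_le (R : realType) n (A B : 'M[R[i]]_n) i :
  loewner A B -> A i i <= B i i.
Proof. by move=> /psdmx_diag_ge0 /(_ i); rewrite !mxE subr_ge0. Qed.

Lemma Re_sum (R : realType) (I : Type) (r : seq I) (F : I -> R[i]) :
  complex.Re (\sum_(j <- r) F j) = \sum_(j <- r) complex.Re (F j).
Proof. exact: (@raddf_sum _ _ (@complex.Re R : Rcomplex R -> R)). Qed.

Lemma nondecreasing_ratr_le_lim (R : realType) (u : nat -> rat) (l : R) :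
  (forall k, u k <= u k.+1) -> (fun k => ratr (u k) : R) @ \oo --> l ->
  forall k, ratr (u k) <= l.
Proof.
move=> u_incr u_cvg k; rewrite -(cvg_lim _ u_cvg) //.
apply: nondecreasing_cvgn_le (cvgP _ u_cvg) k; apply/nondecreasing_seqP => a.
by rewrite ler_rat u_incr.
Qed.

Lemma gmx_to_scalar (R : realType) n (q : rat) :
  gmx_to R ((q%:C)%:M : 'M_n) = (ratr q : R)%:C%:M.
Proof.
apply/matrixP => i j; rewrite !mxE /gauss_to /=.
by case: (i == j); rewrite ?mulr1n ?mulr0n /= ?rmorph0.
Qed.

Lemma lower_computable_semi_POVM_scalar (R : realType) n (m : bstring -> R) :
  lower_computable_semi_measure m ->
  lower_computable_semi_POVM (fun s => (m s)%:C%:M : 'M[R[i]]_n).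
Proof.
move=> [[m_ge0 m_sum] [f [f_rec f_cvg f_incr]]].
have conjR (x : R) : Num.conj x%:C = x%:C by exact: conjc_real.
have psdmx_scalarR (x : R) : 0 <= x -> psdmx ((x%:C)%:M : 'M[R[i]]_n).
  by move=> x_ge0; apply: psdmx_scalar; rewrite ler0c.
split; first split => [s|F F_uniq]; first exact: psdmx_scalarR.
  rewrite /loewner -!raddf_sum -[1%:M]/((1%:C)%:M) -!raddfB.
  by apply: psdmx_scalarR; rewrite subr_ge0 m_sum.
exists (fun k s => (f k s)%:C%:M); split.
- exact: total_recursive2_scalar.
- by move=> k s; rewrite /hermitian_Q gmx_to_scalar; red; rewrite adjmx_scalar conjR.
- move=> s i j; rewrite [(m s)%:C%:M i j]mxE; split; under eq_fun do rewrite gmx_to_scalar mxE;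
    by case: (i == j); rewrite ?mulr1n ?mulr0n ?mxE /=; apply: cvg_cst || apply: f_cvg.
- move=> k s; rewrite /loewner gmx_to_scalar -!raddfB; apply: psdmx_scalarR.
  by rewrite subr_ge0 (nondecreasing_ratr_le_lim (f_incr^~ s)).
Qed.

Lemma running_max_ge (v : nat -> rat) k : v k <= running_max v k.
Proof. by case: k => //= k; rewrite le_max lexx orbT. Qed.

Lemma running_max_incr (v : nat -> rat) k : running_max v k <= running_max v k.+1.
Proof. by rewrite /= le_max lexx. Qed.

Lemma running_max_le (R : realType) (l : R) (v : nat -> rat) k :
  (forall j, ratr (v j) <= l) -> ratr (running_max v k) <= l.
Proof. by move=> v_le; elim: k => //= k IHk; rewrite /Num.max; case: ifP. Qed.

(* Monotonicity of the approximants is restored by taking running maxima. *)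
Lemma lower_computable_semi_measure_diag (R : realType) n
    (P : bstring -> 'M[R[i]]_n) i :
  lower_computable_semi_POVM P ->
  lower_computable_semi_measure (fun s => complex.Re (P s i i)).
Proof.
move=> [[P_psd P_sum] [f [f_rec _ f_cvg f_le]]]; split.
  split=> [s|F F_uniq]; first exact: Re_le (psdmx_diag_ge0 (P_psd s) i).
  by have := Re_le (loewner_diag_le i (P_sum F F_uniq)); rewrite summxE mxE eqxx Re_sum.
exists (fun k s => running_max (fun l => complex.Re (f l s i i)) k); split.
- exact: total_recursive2_running_max_diag.
- move=> s; pose u l : R := ratr (complex.Re (f l s i i)).
  have u_cvg : u @ \oo --> complex.Re (P s i i).
    by case: (f_cvg s i i); under eq_fun do rewrite mxE.
  have u_le l : u l <= complex.Re (P s i i).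
    by have := Re_le (loewner_diag_le i (f_le l s)); rewrite mxE.
  apply: squeeze_cvgr u_cvg (cvg_cst _); apply: nearW => k.
  by rewrite ler_rat running_max_ge running_max_le.
- by move=> k s; exact: running_max_incr.
Qed.

Lemma sum_le_weighted (R : realType) (I : finType) (c x : I -> R) (y : R) :
  (forall i, 0 < c i) -> (forall i, c i * x i <= y) -> \sum_i x i <= (\sum_i (c i)^-1) * y.
Proof.
move=> c_gt0 cx_le; rewrite mulr_suml; apply: ler_sum => i _.
by rewrite -(mulKf (lt0r_neq0 (c_gt0 i)) (x i)) ler_pM2l ?invr_gt0.
Qed.

Theorem mainTheorem3 (R : realType) (N : nat) (hN : (0 < N)%N)
  (m : bstring -> R) :
  universal_probability m ->
  universal_semi_POVM (fun s : bstring => (m s)%:C%:M : 'M[R[i]]_N).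
Proof.
move=> [m_lc m_univ]; split; first exact: lower_computable_semi_POVM_scalar.
move=> P P_lc; have [[P_psd _] _] := P_lc.
have /choice[c c_dom] i : exists c : R,
    0 < c /\ forall s, c * complex.Re (P s i i) <= m s.
  by have [c c_gt0 c_dom] := m_univ _ (lower_computable_semi_measure_diag i P_lc); exists c.
have c_gt0 i : 0 < c i by case: (c_dom i).
pose K := \sum_i (c i)^-1.
have K_gt0 : 0 < K.
  rewrite /K (bigD1 (Ordinal hN)) //= ltr_pwDl ?invr_gt0 //.
  by apply: sumr_ge0 => i _; rewrite invr_ge0 ltW.
exists (2 ^+ N * K)^-1; first by rewrite invr_gt0 mulr_gt0 ?exprn_gt0.
move=> s; apply: loewner_psdmx_scalar (P_psd s) K_gt0 _.
by rewrite Re_sum; apply: sum_le_weighted => // i; case: (c_dom i).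
Qed.
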